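(* Let $k\ge 2$ be an integer such that $T_k(x)=x^k+x+1$ is primitive over $\mathbb{F}_2$, let $M_k$ be the binary cyclic word defined in the context, and let $U$ be the rotation of $M_k$ that starts with $0^k$. Let $U_{\mathrm{lin}}=U\,U[0..k-2]$. Then $$\operatorname{BWT}(U_{\mathrm{lin}}\$)=0^{k-1}\,1\,\$\,(0011)^{2^{k-2}-1}\,010,$$ and this string has exactly $2^{k-1}+4$ runs.
   Context: Define $F:\{0,1\}^k\to\{0,1\}^k$ by $F(x_0,\dots,x_{k-1})=(x_1,\dots,x_{k-1},x_0\oplus x_1)$, and let $F'$ agree with $F$ except $F'(0^k)=0^{k-1}1$ and $F'(10^{k-1})=0^k$. Since $T_k$ is primitive, $F'$ is a single cycle on all $2^k$ states; starting from any state $x_0$ with $x_{t+1}=F'(x_t)$, let $w$ be the cyclic word of length $2^k$ with $w[t]$ the first coordinate of $x_t$ (a binary de Bruijn cycle of order $k$). $M_k$ is obtained from $w$ by reversing it and complementing every bit. Strings are $0$-indexed; a rotation of a cycle $C$ of length $n$ by $c$ is the word $U[i]=C[(i+c)\bmod n]$. $\$$ is an end-marker smaller than $0$ and $1$, appended once. $\operatorname{BWT}(v)$ is the last column of the matrix of the lexicographically sorted cyclic rotations of $v$; a run is a maximal block of one repeated symbol. *)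

From mathcomp Require Import all_boot all_algebra.
Set Implicit Arguments. Unset Strict Implicit. Unset Printing Implicit Defensive.
Import GRing.Theory.

Local Open Scope ring_scope.
Definition primitive_poly2 (p : {poly 'F_2}) : Prop :=
  let k := (size p).-1 in
  [/\ irreducible_poly p,
      p %| 'X^(2 ^ k - 1)%N - 1
    & forall e : nat, (0 < e)%N -> p %| 'X^e - 1 -> (2 ^ k - 1 <= e)%N].

Definition Tpoly (k : nat) : {poly 'F_2} := 'X^k + 'X + 1.
Local Close Scope ring_scope.

(* states are sequences of booleans of length k; x = (x_0, ..., x_{k-1}) *)
Definition Fshift (x : seq bool) : seq bool :=
  behead x ++ [:: addb (nth false x 0) (nth false x 1)].

Definition Fprime (k : nat) (x : seq bool) : seq bool :=
  if x == nseq k false then rcons (nseq k.-1 false) true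
  else if x == true :: nseq k.-1 false then nseq k false
  else Fshift x.

Definition dB_word (k : nat) (x0 : seq bool) : seq bool :=
  mkseq (fun t => nth false (iter t (Fprime k) x0) 0) (2 ^ k).

Definition Mword (k : nat) (x0 : seq bool) : seq bool :=
  map negb (rev (dB_word k x0)).

Definition rotation (C : seq bool) (c : nat) : seq bool :=
  mkseq (fun i => nth false C ((i + c) %% size C)) (size C).

(* Alphabet encoded in nat: $ = 0, bit 0 = 1, bit 1 = 2 (so $ < 0 < 1). *)
Definition sym (b : bool) : nat := (nat_of_bool b).+1.
Definition dollar : nat := 0.

Fixpoint lexle (s t : seq nat) : bool :=
  match s, t with
  | [::], _ => true
  | _ :: _, [::] => false
  | a :: s', b :: t' => (a < b) || ((a == b) && lexle s' t')
  end.

Definition BWT (v : seq nat) : seq nat :=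
  map (fun r => last dollar r) (sort lexle [seq rot i v | i <- iota 0 (size v)]).

Fixpoint runs (s : seq nat) : nat :=
  match s with
  | [::] => 0
  | [:: _] => 1
  | x :: ((y :: _) as s') => (x != y) + runs s'
  end.

Definition bwt_target (k : nat) : seq nat :=
  nseq k.-1 (sym false) ++ [:: sym true; dollar]
  ++ flatten (nseq (2 ^ (k - 2) - 1) [:: sym false; sym false; sym true; sym true])
  ++ [:: sym false; sym true; sym false].

From mathcomp Require Import all_boot all_algebra.
From mathcomp Require Import ring zify.

Set Implicit Arguments. Unset Strict Implicit. Unset Printing Implicit Defensive.
Import GRing.Theory.

(* Primitivity of T_k makes the register F, read on polynomials as
   multiplication by X modulo T_k, run through all 2^k - 1 nonzero states in a
   single cycle; F' splices 0^k into that cycle, so w, hence M_k and U, are de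
   Bruijn cycles: the 2^k windows of length k of U_lin are pairwise distinct.
   The rotations of U_lin$ starting in U are therefore sorted by the binary
   value of their first window, after the k rotations starting in the trailing
   0^(k-1)$.  The BWT letter of such a rotation is the bit of U preceding the
   window; as M_k is w reversed and complemented, it is the complement of the
   feedback of F' on the reversed complemented window, which is the XNOR of the
   window's last two bits except for the windows 1^(k-1)0 and 1^k.  Read by
   increasing window value this gives (0011)^(2^(k-2)-1) followed by 010. *)

(** * The register F as multiplication by X *)

Lemma size_Fshift x : 0 < size x -> size (Fshift x) = size x.
Proof. by case: x => //= a s _; rewrite size_cat addn1. Qed.

Lemma nth_Fshift x j : 0 < size x ->
  nth false (Fshift x) j =
  if j < (size x).-1 then nth false x j.+1
  else if j == (size x).-1 then nth false x 0 (+) nth false x 1 else false.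
Proof.
case: x => //= a s _; rewrite nth_cat size_behead /=.
case: ltnP => // j_ge; case: eqP => [->|/eqP j_ne]; first by rewrite subnn.
by rewrite nth_default //= subn_gt0 ltn_neqAle eq_sym j_ne.
Qed.

Lemma Fshift_inj x y : 1 < size x -> size y = size x -> Fshift x = Fshift y -> x = y.
Proof.
case: x => [|a [|b s]] //=; case: y => [|a' [|b' s']] //= _ [size_s]; rewrite /Fshift /=.
move=> [<- /eqP]; rewrite eqseq_cat // => /andP [/eqP <- /eqP [feedback_eq]].
by congr (_ :: _ :: _); move: feedback_eq; case: a; case: a'; case: b.
Qed.

Lemma Fshift_nseq0 k : 1 < k -> Fshift (nseq k false) = nseq k false.
Proof. by case: k => [|[|k]] //= _; rewrite /Fshift /= -[[:: false]]/(nseq 1 false) -nseqD addn1. Qed.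

Lemma size_iter_Fshift k x t : 0 < k -> size x = k -> size (iter t Fshift x) = k.
Proof. by move=> k_gt0 size_x; elim: t => //= t IH; rewrite size_Fshift IH. Qed.

(* The states whose [state_poly] is 1 and X; F' inserts 0^k between them. *)
Definition state1 k := true :: nseq k.-1 false.
Definition stateX k := rcons (nseq k.-1 false) true.

Lemma size_stateX k : 0 < k -> size (stateX k) = k.
Proof. by move=> k_gt0; rewrite size_rcons size_nseq prednK. Qed.

Lemma Fshift_state1 k : 1 < k -> Fshift (state1 k) = stateX k.
Proof. by case: k => [|[|k]] //= _; rewrite /Fshift /stateX /= cats1. Qed.

Section StatePoly.
Local Open Scope ring_scope.

(* The state (x_0, ..., x_{k-1}) is read as x_0 + x_{k-1} X + ... + x_1 X^(k-1);
   in this encoding F acts as multiplication by X modulo T_k. *)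
Definition state_poly (k : nat) (x : seq bool) : {poly 'F_2} :=
  \poly_(i < k) (nth false x (if i == 0%N then 0 else k - i)%N)%:R.

Lemma natr_addb (a b : bool) : ((a (+) b)%:R : 'F_2) = a%:R + b%:R.
Proof. by case: a; case: b; apply/eqP. Qed.

Lemma natr_bool_inj : injective (fun b : bool => (b%:R : 'F_2)).
Proof. by case; case=> // /eqP. Qed.

Lemma coef_Tpoly k i : (1 < k)%N ->
  (Tpoly k)`_i = ((i == 0%N) || (i == 1%N) || (i == k))%:R.
Proof.
move=> k_gt1; rewrite /Tpoly !coefD coefXn coefX coef1.
case: i => [|[|i]] /=.
- by rewrite eq_sym (gtn_eqF (ltnW k_gt1)) !add0r.
- by rewrite eq_sym (gtn_eqF k_gt1) add0r addr0.
- by rewrite !addr0.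
Qed.

Lemma size_Tpoly k : (1 < k)%N -> size (Tpoly k) = k.+1.
Proof.
by move=> k_gt1; rewrite /Tpoly -addrA -polyC1 size_polyDl size_polyXn // size_XaddC.
Qed.

Lemma state_poly_Fshift k x : (1 < k)%N -> size x = k ->
  state_poly k (Fshift x) = 'X * state_poly k x + (nth false x 1)%:R%:P * Tpoly k.
Proof.
move=> k_gt1 size_x; apply/polyP => i.
have size_x_gt0 : (0 < size x)%N by rewrite size_x ltnW.
rewrite coefD coefXM coefCM coef_Tpoly // !coef_poly.
case: i => [|[|i]] /=; rewrite nth_Fshift // size_x.
- by rewrite (ltnW k_gt1) -subn1 subn_gt0 k_gt1 mulr1 add0r.
- by rewrite k_gt1 (ltnW k_gt1) subn1 ltnn eqxx natr_addb mulr1.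
- case: (ltngtP i.+2 k) => [ltik|_|<-]; rewrite ?mulr0 ?addr0 ?mulr1 //.
    have -> : (k - i.+2 < k.-1)%N by rewrite -subn1 ltn_sub2l // ltnW.
    by rewrite subnSK // ltnW.
  by rewrite subSnn addrr_pchar2 // pchar_Fp.
Qed.

Lemma state_poly_inj k a b : size a = k -> size b = k ->
  state_poly k a = state_poly k b -> a = b.
Proof.
move=> size_a size_b E; apply: (@eq_from_nth _ false) => [|j]; first by rewrite size_a size_b.
rewrite size_a => j_lt; pose i := if j == 0%N then 0%N else (k - j)%N.
have i_lt : (i < k)%N.
  by rewrite /i; case: eqP => [_|/eqP]; [apply: leq_ltn_trans j_lt | rewrite -lt0n; lia].
have ij : (if i == 0%N then 0%N else k - i)%N = j.
  rewrite /i; case: (j =P 0%N) => [->|/eqP j_neq0]; first by rewrite eqxx.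
  by rewrite subn_eq0 leqNgt j_lt subKn // ltnW.
have := congr1 (fun p : {poly 'F_2} => p`_i) E.
by rewrite /= !coef_poly i_lt ij => /natr_bool_inj.
Qed.

Lemma state_poly_eq_mod k a b : (1 < k)%N -> size a = k -> size b = k ->
  Tpoly k %| state_poly k a - state_poly k b -> a = b.
Proof.
move=> k_gt1 size_a size_b dvdT; apply: (state_poly_inj size_a size_b).
have [/eqP|nz] := eqVneq (state_poly k a - state_poly k b) 0.
  by rewrite subr_eq0 => /eqP.
have := dvdp_leq nz dvdT; rewrite size_Tpoly // ltnNge.
have := size_polyD (state_poly k a) (- state_poly k b); rewrite size_polyN.
by move=> /leq_trans-> //; rewrite geq_max !size_poly.
Qed.

Lemma Tpoly_dvd_iter_Fshift k x t : (1 < k)%N -> size x = k ->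
  Tpoly k %| 'X^t * state_poly k x - state_poly k (iter t Fshift x).
Proof.
move=> k_gt1 size_x; elim: t => [|t IH] /=; first by rewrite expr0 mul1r subrr dvdp0.
rewrite state_poly_Fshift ?(size_iter_Fshift _ (ltnW k_gt1)) //.
set y := iter t Fshift x.
have -> : 'X^(t.+1) * state_poly k x - ('X * state_poly k y + (nth false y 1)%:R%:P * Tpoly k)
        = 'X * ('X^t * state_poly k x - state_poly k y) - (nth false y 1)%:R%:P * Tpoly k.
  by rewrite exprS; ring.
by apply: dvdp_sub; [apply: dvdp_mull | apply: dvdp_mull (dvdpp _)].
Qed.

Lemma state_poly_stateX k : (1 < k)%N -> state_poly k (stateX k) = 'X.
Proof.
move=> k_gt1; apply/polyP => i; rewrite coef_poly coefX /stateX.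
rewrite nth_rcons size_nseq nth_nseq.
case: i => [|[|i]] /=.
- by rewrite (ltnW k_gt1) -subn1 subn_gt0 k_gt1.
- by rewrite k_gt1 subn1 ltnn eqxx.
- case: ltnP => // ltik.
  by have -> : (k - i.+2 < k.-1)%N by rewrite -subn1 ltn_sub2l // ltnW.
Qed.

Lemma coprimep_Tpoly_X k : (1 < k)%N -> coprimep (Tpoly k) 'X.
Proof.
move=> k_gt1; have := coprimep_XsubC (Tpoly k) 0; rewrite subr0 => ->.
by rewrite /root /Tpoly !hornerE expr0n gtn_eqF ?(ltnW k_gt1) // add0r oner_neq0.
Qed.

End StatePoly.

(** * The modified register F' *)

Lemma size_Fprime k x : 1 < k -> size x = k -> size (Fprime k x) = k.
Proof.
move=> k_gt1 size_x; rewrite /Fprime; case: eqP => _.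
  by rewrite size_rcons size_nseq prednK // ltnW.
by case: eqP => _; rewrite ?size_nseq // size_Fshift size_x // ltnW.
Qed.

Section PrimitiveRegister.
Variable k : nat.
Hypothesis k_gt1 : 1 < k.
Hypothesis Tk_primitive : primitive_poly2 (Tpoly k).
Local Notation n := (2 ^ k).
Local Notation e := (stateX k).

Lemma exp2_ge4 : 4 <= n.
Proof. by rewrite (@leq_exp2l 2 2 k). Qed.

Lemma size_iter_Fshift_stateX t : size (iter t Fshift e) = k.
Proof. by rewrite (size_iter_Fshift _ (ltnW k_gt1)) ?size_stateX // ltnW. Qed.

Lemma iter_Fshift_period x : size x = k -> iter (n - 1) Fshift x = x.
Proof.
move=> size_x; move: Tk_primitive => [_ dvd_Xn1 _]; rewrite size_Tpoly //= in dvd_Xn1.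
apply: (state_poly_eq_mod k_gt1) => //; first by rewrite (size_iter_Fshift _ (ltnW k_gt1)).
have := Tpoly_dvd_iter_Fshift (n - 1) k_gt1 size_x.
set p := state_poly k x; set q := state_poly k _.
have -> : (q - p = ('X^(n - 1) - 1) * p - ('X^(n - 1) * p - q))%R by ring.
by apply: dvdp_sub; apply: dvdp_mulr.
Qed.

Lemma iter_Fshift_stateX_neq a d : 0 < d < n - 1 ->
  iter (d + a) Fshift e != iter a Fshift e.
Proof.
case/andP=> d_gt0 d_lt; elim: a => [|a IH]; last first.
  rewrite addnS !iterS; apply: contraNneq IH => E.
  by apply/eqP/(Fshift_inj _ _ E); rewrite !size_iter_Fshift_stateX.
move: Tk_primitive => [_ _ order_min]; rewrite size_Tpoly //= in order_min.
apply/eqP; rewrite addn0 => E.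
have := Tpoly_dvd_iter_Fshift d k_gt1 (size_stateX (ltnW k_gt1)).
rewrite E state_poly_stateX //.
have -> : ('X^d * 'X - 'X = ('X^d - 1) * 'X :> {poly 'F_2})%R by ring.
rewrite Gauss_dvdpl ?coprimep_Tpoly_X // => /(order_min _ d_gt0).
by rewrite leqNgt d_lt.
Qed.

Lemma iter_Fshift_stateX_neq0 s : iter s Fshift e != nseq k false.
Proof.
(* 0^k is fixed by F, yet the orbit of stateX returns to stateX. *)
apply/eqP=> Es; have n_ge4 := exp2_ge4.
have from_s m : iter (m + s) Fshift e = nseq k false.
  by elim: m => //= m ->; rewrite Fshift_nseq0.
have period q : iter ((n - 1) * q) Fshift e = e.
  elim: q => [|q IH]; first by rewrite muln0.
  by rewrite mulnS iterD IH iter_Fshift_period ?size_stateX // ltnW.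
have s_le : s <= (n - 1) * s.+1.
  by rewrite (leq_trans (leqnSn s)) // leq_pmull // subn_gt0 (leq_trans _ n_ge4).
have := period s.+1; rewrite -(subnK s_le).
rewrite from_s => /(congr1 (nth false ^~ k.-1)).
by rewrite nth_rcons size_nseq ltnn eqxx nth_nseq if_same.
Qed.

Lemma iter_Fshift_stateX_last : iter (n - 2) Fshift e = state1 k.
Proof.
have n_sub : n - 1 = (n - 2).+1 by rewrite -subSn ?subSS // (leq_trans _ exp2_ge4).
apply: Fshift_inj; first by rewrite size_iter_Fshift_stateX.
  by rewrite size_iter_Fshift_stateX /= size_nseq prednK // ltnW.
rewrite Fshift_state1 // -iterS -n_sub.
by rewrite iter_Fshift_period // size_stateX // ltnW.
Qed.

Lemma iter_Fshift_stateX_neq1 s : s < n - 2 -> iter s Fshift e != state1 k.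
Proof.
move=> s_lt; apply: contra (@iter_Fshift_stateX_neq 0 s.+1 _) => [/eqP E|].
  by rewrite addn0 iterS E Fshift_state1.
by apply/andP; split => //; lia.
Qed.

Definition Fprime_orbit t := iter t (Fprime k) (nseq k false).

Lemma size_Fprime_orbit t : size (Fprime_orbit t) = k.
Proof. by elim: t => [|t IH] /=; rewrite ?size_nseq // size_Fprime. Qed.

Lemma Fprime_orbitS t : t <= n - 2 -> Fprime_orbit t.+1 = iter t Fshift e.
Proof.
elim: t => [|t IH] t_le; first by rewrite /Fprime_orbit /= /Fprime eqxx.
rewrite /Fprime_orbit iterS -/(Fprime_orbit t.+1) IH 1?ltnW //= /Fprime.
by rewrite (negbTE (iter_Fshift_stateX_neq0 t)) (negbTE (iter_Fshift_stateX_neq1 t_le)).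
Qed.

Lemma Fprime_orbit_period : Fprime_orbit n = nseq k false.
Proof.
have -> : n = (n - 2).+2 by have := exp2_ge4; lia.
rewrite /Fprime_orbit iterS -/(Fprime_orbit (n - 2).+1) Fprime_orbitS //.
by rewrite iter_Fshift_stateX_last /Fprime ifN ?eqxx //; case: k k_gt1.
Qed.

Lemma Fprime_orbitD t m : Fprime_orbit (t + m * n) = Fprime_orbit t.
Proof.
have orbitDn s : Fprime_orbit (s + n) = Fprime_orbit s.
  by rewrite /Fprime_orbit iterD -/(Fprime_orbit n) Fprime_orbit_period.
by elim: m => [|m IH]; rewrite ?addn0 // mulSnr addnA orbitDn.
Qed.

Lemma Fprime_orbit_mod t : Fprime_orbit t = Fprime_orbit (t %% n).
Proof. by rewrite {1}(divn_eq t n) addnC Fprime_orbitD. Qed.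

Lemma Fprime_orbit_inj a b : a < n -> b < n -> Fprime_orbit a = Fprime_orbit b -> a = b.
Proof.
wlog ab : a b / a <= b => [H a_lt b_lt E|].
  by case: (leqP a b) => [|/ltnW] ab; [|apply/esym]; apply: H.
move=> a_lt b_lt; case: (ltngtP a b) ab => // ab _.
case: b b_lt ab => // b b_lt ab; rewrite Fprime_orbitS; last by lia.
case: a a_lt ab => [|a] a_lt ab E.
  by case/eqP: (iter_Fshift_stateX_neq0 b).
rewrite Fprime_orbitS in E; last by lia.
have d_range : 0 < b - a < n - 1 by lia.
by case/eqP: (@iter_Fshift_stateX_neq a (b - a) d_range); rewrite subnK ?E //; lia.
Qed.

Lemma Fprime_orbit_onto x : size x = k -> exists2 t, t < n & Fprime_orbit t = x.
Proof.
move=> size_x; pose L := mkseq Fprime_orbit n.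
pose A := [seq val t | t : k.-tuple bool].
have uniqL : uniq L.
  rewrite map_inj_in_uniq ?iota_uniq // => a b; rewrite !mem_iota.
  exact: Fprime_orbit_inj.
have LA : {subset L <= A}.
  move=> y /mapP [t _ ->]; apply/mapP.
  by exists (Tuple (introT eqP (size_Fprime_orbit t))); rewrite ?mem_enum.
have [|_ /(_ x)] := uniq_min_size uniqL LA.
  by rewrite size_map -cardE card_tuple card_bool size_mkseq.
have -> : x \in A by apply/mapP; exists (Tuple (introT eqP size_x)); rewrite ?mem_enum.
by case/mapP=> t; rewrite mem_iota => t_lt ->; exists t.
Qed.

End PrimitiveRegister.

(** * The de Bruijn word and its rotation U *)

Definition feedback k (x : seq bool) : bool :=
  if x == nseq k false then true else if x == state1 k then false
  else nth false x 0 (+) nth false x 1.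

Lemma nth_Fprime k x j : 1 < k -> size x = k -> j < k ->
  nth false (Fprime k x) j = if j < k.-1 then nth false x j.+1 else feedback k x.
Proof.
move=> k_gt1 size_x j_lt; rewrite /Fprime /feedback -/(state1 k).
have [->|_] := eqVneq x (nseq k false).
  rewrite nth_rcons size_nseq !nth_nseq; case: ltnP => [_|j_ge]; first by rewrite if_same.
  by rewrite (_ : j = k.-1) ?eqxx //; lia.
have [->|_] := eqVneq x (state1 k).
  by rewrite nth_nseq j_lt /=; case: ifP; rewrite // nth_nseq if_same.
rewrite nth_Fshift size_x; last by lia.
by case: ltnP => // j_ge; rewrite (_ : j = k.-1) ?eqxx //; lia.
Qed.

Section DeBruijnWord.
Variable k : nat.
Hypothesis k_gt1 : 1 < k.
Hypothesis Tk_primitive : primitive_poly2 (Tpoly k).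
Variable x0 : seq bool.
Hypothesis size_x0 : size x0 = k.
Local Notation n := (2 ^ k).

Definition dB_state t := iter t (Fprime k) x0.
Definition dB_bit t := nth false (dB_state t) 0.

Lemma size_dB_state t : size (dB_state t) = k.
Proof. by elim: t => //= t IH; rewrite size_Fprime. Qed.

Lemma dB_state_shift : exists a, forall t, dB_state t = Fprime_orbit k (t + a).
Proof.
have [a _ x0_def] := Fprime_orbit_onto k_gt1 Tk_primitive size_x0.
by exists a => t; rewrite /dB_state -x0_def /Fprime_orbit iterD.
Qed.

Lemma dB_stateD t m : dB_state (t + m * n) = dB_state t.
Proof. by have [a shift] := dB_state_shift; rewrite !shift addnAC (Fprime_orbitD k_gt1 Tk_primitive). Qed.

Lemma dB_state_eq_mod s t : dB_state s = dB_state t -> s = t %[mod n].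
Proof.
have [a shift] := dB_state_shift; rewrite !shift => E.
have n_gt0 : 0 < n by rewrite expn_gt0.
have := Fprime_orbit_inj k_gt1 Tk_primitive (ltn_pmod (s + a) n_gt0) (ltn_pmod (t + a) n_gt0).
by rewrite -!(Fprime_orbit_mod k_gt1 Tk_primitive) => /(_ E)/eqP; rewrite eqn_modDr => /eqP.
Qed.

Lemma dB_bitD t m : dB_bit (t + m * n) = dB_bit t.
Proof. by rewrite /dB_bit dB_stateD. Qed.

Lemma nth_dB_state t j : j < k -> nth false (dB_state t) j = dB_bit (t + j).
Proof.
elim: j t => [|j IH] t j_lt; first by rewrite addn0.
rewrite -addSnnS -IH ?(ltnW j_lt) // /dB_state iterS nth_Fprime ?size_dB_state ?(ltnW j_lt) //.
by rewrite (_ : j < k.-1) //; lia.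
Qed.

Lemma dB_state_window t : dB_state t = mkseq (fun j => dB_bit (t + j)) k.
Proof.
apply: (@eq_from_nth _ false) => [|j]; first by rewrite size_dB_state size_mkseq.
by rewrite size_dB_state => j_lt; rewrite nth_mkseq // nth_dB_state.
Qed.

Lemma dB_bit_feedback t : dB_bit (t + k) = feedback k (dB_state t).
Proof.
have k1_lt : k.-1 < k by rewrite ltn_predL ltnW.
have -> : t + k = t.+1 + k.-1 by rewrite addSnnS prednK // ltnW.
by rewrite -nth_dB_state // /dB_state iterS nth_Fprime ?size_dB_state // ltnn.
Qed.

End DeBruijnWord.

Lemma ltn_exp2 k : k < 2 ^ k.
Proof. exact: ltn_expl. Qed.

Definition pred_bit k (v : seq bool) : bool := ~~ feedback k (rev (map negb v)).

Lemma pred_bit_nseq0 k : 1 < k -> pred_bit k (nseq k false) = true.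
Proof. by case: k => [|[|k]] // _; rewrite /pred_bit /feedback map_nseq rev_nseq. Qed.

Section Rotation.
Variables (k : nat) (x0 : seq bool) (c : nat).
Hypothesis k_gt1 : 1 < k.
Hypothesis Tk_primitive : primitive_poly2 (Tpoly k).
Hypothesis size_x0 : size x0 = k.
Hypothesis c_lt : c < 2 ^ k.
Local Notation n := (2 ^ k).
Local Notation bit := (dB_bit k x0).
Local Notation U := (rotation (Mword k x0) c).
Local Notation Ulin := (U ++ take k.-1 U).

Lemma size_Mword : size (Mword k x0) = n.
Proof. by rewrite size_map size_rev size_mkseq. Qed.

Lemma nth_Mword i : i < n -> nth false (Mword k x0) i = ~~ bit (n - 1 - i).
Proof.
move=> i_lt; rewrite (nth_map false) ?size_rev ?size_mkseq // nth_rev ?size_mkseq //.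
by rewrite nth_mkseq -?subnDA ?add1n //; lia.
Qed.

(* The offset 3n keeps every index below exact: U and Ulin only use i < 2n. *)
Definition ubit i := ~~ bit (3 * n - 1 - c - i).

Lemma ubitD i : i < n -> ubit (i + n) = ubit i.
Proof.
move=> i_lt; rewrite /ubit; congr (~~ _).
by rewrite -(dB_bitD k_gt1 Tk_primitive size_x0 _ 1); congr bit; lia.
Qed.

Lemma size_U : size U = n.
Proof. by rewrite size_mkseq size_Mword. Qed.

Lemma nth_U i : i < n -> nth false U i = ubit i.
Proof.
move=> i_lt; rewrite /rotation size_Mword nth_mkseq // /ubit.
rewrite nth_Mword ?ltn_pmod ?expn_gt0 //; congr (~~ _).
have [ic_lt|ic_ge] := ltnP (i + c) n.
  by rewrite modn_small // -(dB_bitD k_gt1 Tk_primitive size_x0 _ 2); congr (dB_bit _ _ _); lia.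
rewrite -[i + c](subnK ic_ge) modnDr modn_small; last by lia.
by rewrite -(dB_bitD k_gt1 Tk_primitive size_x0 _ 1); congr (dB_bit _ _ _); lia.
Qed.

Lemma size_Ulin : size Ulin = n + k.-1.
Proof. by rewrite size_cat size_takel size_U // (leq_trans (leq_pred k)) // ltnW ?ltn_exp2. Qed.

Lemma nth_Ulin i : i < n + k.-1 -> nth false Ulin i = ubit i.
Proof.
move=> i_lt; rewrite nth_cat size_U; case: ltnP => [|i_ge]; first exact: nth_U.
have k_lt := ltn_exp2 k.
rewrite nth_take ?nth_U; try lia.
by rewrite -ubitD ?subnK //; lia.
Qed.

Definition uwindow i := mkseq (fun j => ubit (i + j)) k.

Lemma Ulin_window i : i < n -> take k (drop i Ulin) = uwindow i.
Proof.
move=> i_lt; have k_lt := ltn_exp2 k.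
apply: (@eq_from_nth _ false) => [|j].
  by rewrite size_takel ?size_mkseq // size_drop size_Ulin; lia.
rewrite size_takel => [j_lt|]; last by rewrite size_drop size_Ulin; lia.
by rewrite nth_take // nth_drop nth_Ulin ?nth_mkseq //; lia.
Qed.

Lemma uwindow_state i : i <= n ->
  rev (map negb (uwindow i)) = dB_state k x0 (3 * n - c - i - k).
Proof.
move=> i_le; have k_lt := ltn_exp2 k.
rewrite (dB_state_window k_gt1 size_x0); apply: (@eq_from_nth _ false) => [|j].
  by rewrite size_rev size_map !size_mkseq.
rewrite size_rev size_map size_mkseq => j_lt.
rewrite nth_rev size_map size_mkseq // (nth_map false) ?size_mkseq; last by lia.
by rewrite !nth_mkseq /ubit ?negbK; first congr (dB_bit _ _ _); lia.
Qed.

Lemma uwindow_inj i j : i < n -> j < n -> uwindow i = uwindow j -> i = j.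
Proof.
wlog ij : i j / i <= j => [H i_lt j_lt E|i_lt j_lt].
  by case: (leqP i j) => [|/ltnW] ij; [|apply/esym]; apply: H.
have k_lt := ltn_exp2 k.
move/(congr1 (fun v => rev (map negb v))); rewrite !uwindow_state ?(ltnW i_lt) ?(ltnW j_lt) //.
move/(dB_state_eq_mod k_gt1 Tk_primitive size_x0)/eqP.
have -> : 3 * n - c - i - k = (3 * n - c - j - k) + (j - i) by lia.
rewrite -[X in _ == X %[mod _]]addn0 eqn_modDl mod0n modn_small; last by lia.
by move/eqP; lia.
Qed.

Lemma ubit_pred i : 0 < i <= n -> ubit i.-1 = pred_bit k (uwindow i).
Proof.
case/andP=> i_gt0 i_le; have k_lt := ltn_exp2 k.
rewrite /pred_bit uwindow_state // -(dB_bit_feedback k_gt1 size_x0) /ubit.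
by congr (~~ dB_bit _ _ _); lia.
Qed.

Lemma Ulin_window_inj i j : i < n -> j < n ->
  take k (drop i Ulin) = take k (drop j Ulin) -> i = j.
Proof. by move=> i_lt j_lt; rewrite !Ulin_window //; apply: uwindow_inj. Qed.

Lemma nth_Ulin_pred i : 0 < i < n ->
  nth false Ulin i.-1 = pred_bit k (take k (drop i Ulin)).
Proof.
case/andP=> i_gt0 i_lt; have k_lt := ltn_exp2 k.
rewrite nth_Ulin; last by lia.
by rewrite Ulin_window // ubit_pred // i_gt0 ltnW.
Qed.

Hypothesis U_prefix : take k U = nseq k false.

Lemma Ulin_prefix : take k (drop 0 Ulin) = nseq k false.
Proof. by rewrite drop0 take_cat size_U ltn_exp2. Qed.

Lemma nth_Ulin_tail i : n <= i < n + k.-1 -> nth false Ulin i = false.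
Proof.
case/andP=> i_ge i_lt; rewrite nth_cat size_U ltnNge i_ge /= nth_take; last by lia.
by rewrite -(nth_take _ (_ : i - n < k)) ?U_prefix ?nth_nseq ?if_same //; lia.
Qed.

Lemma nth_Ulin_last : nth false Ulin n.-1 = true.
Proof.
have k_lt := ltn_exp2 k; have n_gt0 : 0 < n by rewrite expn_gt0.
rewrite nth_Ulin; last by lia.
rewrite ubit_pred; last by rewrite n_gt0 leqnn.
have -> : uwindow n = uwindow 0.
  by apply/eq_in_map => j; rewrite mem_iota => /andP [_ j_lt]; rewrite addnC ubitD //; lia.
by rewrite -Ulin_window // Ulin_prefix pred_bit_nseq0.
Qed.

End Rotation.

(** * Sorting the rotations *)

Section SortByRank.
Variables (T : eqType) (le : rel T).
Hypothesis le_trans : transitive le.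
Hypothesis le_anti : antisymmetric le.
Hypothesis le_total : total le.
Variables (N : nat) (r : nat -> T) (rank : nat -> nat).
Hypothesis rank_lt : forall i, i < N -> rank i < N.
Hypothesis rank_inj : forall i j, i < N -> j < N -> rank i = rank j -> i = j.
Hypothesis rank_mono : forall i j, i < N -> j < N -> rank i <= rank j -> le (r i) (r j).

Lemma perm_rank_iota : perm_eq (map rank (iota 0 N)) (iota 0 N).
Proof.
have uniq_rank : uniq (map rank (iota 0 N)).
  by rewrite map_inj_in_uniq ?iota_uniq // => i j; rewrite !mem_iota; apply: rank_inj.
apply: uniq_perm; rewrite ?iota_uniq //.
have sub : {subset map rank (iota 0 N) <= iota 0 N}.
  by move=> y /mapP [i]; rewrite !mem_iota /= !add0n => /rank_lt ? ->.
by have [|//] := uniq_min_size uniq_rank sub; rewrite size_map.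
Qed.

Lemma rank_onto j : j < N -> exists2 i, i < N & rank i = j.
Proof.
move=> j_lt; have : j \in iota 0 N by rewrite mem_iota.
by rewrite -(perm_mem perm_rank_iota) => /mapP [i]; rewrite mem_iota => ? ->; exists i.
Qed.

Lemma nth_sort_rank d i : i < N -> nth d (sort le (map r (iota 0 N))) (rank i) = r i.
Proof.
move=> i_lt; set idx := sort (relpre rank leq) (iota 0 N).
have size_idx : size idx = N by rewrite size_sort size_iota.
have rank_idx : map rank idx = iota 0 N.
  rewrite -sort_map; move/(perm_sortP leq_total leq_trans anti_leq): perm_rank_iota => ->.
  by apply: sorted_sort; [exact: leq_trans | exact: iota_sorted].
have sorted_idx : sorted le (map r idx).
  rewrite sorted_map; apply: (sub_in_sorted (P := gtn N)) (sort_sorted _ _).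
  - by move=> a b a_lt b_lt; apply: rank_mono.
  - by apply/allP => a; rewrite mem_sort mem_iota.
  - by move=> a b; apply: leq_total.
have -> : sort le (map r (iota 0 N)) = map r idx.
  rewrite -(sorted_sort le_trans sorted_idx); apply/perm_sortP => //.
  by rewrite perm_map // perm_sym perm_sort.
have rank_i_lt : rank i < size idx by rewrite size_idx rank_lt.
rewrite (nth_map 0) //; congr r; apply: rank_inj => //.
  by move: (mem_nth 0 rank_i_lt); rewrite mem_sort mem_iota.
by rewrite -(nth_map 0 0) // rank_idx nth_iota ?rank_lt.
Qed.

End SortByRank.

Lemma lexle_refl : reflexive lexle.
Proof. by elim=> //= a s ->; rewrite eqxx orbT. Qed.

Lemma lexle_trans : transitive lexle.
Proof.
move=> t s u; elim: s t u => [|a s IH] [|b t] [|c u] //=.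
case/orP => [ba|/andP [/eqP <- ts]]; case/orP => [ac|/andP [/eqP <- su]].
- by rewrite (ltn_trans ba ac).
- by rewrite ba.
- by rewrite ac.
- by rewrite eqxx (IH _ _ ts su) orbT.
Qed.

Lemma lexle_anti : antisymmetric lexle.
Proof.
elim=> [|a s IH] [|b t] //=.
case/andP => /orP [ab|/andP [/eqP ab st]] /orP [ba|/andP [/eqP ba ts]].
- by move: (ltn_trans ab ba); rewrite ltnn.
- by move: ab; rewrite ba ltnn.
- by move: ba; rewrite ab ltnn.
- by rewrite ab (IH t) // st ts.
Qed.

Lemma lexle_total : total lexle.
Proof. by elim=> [|a s IH] [|b t] //=; case: (ltngtP a b) => //= ->; rewrite eqxx. Qed.

Lemma lexle_nseq_dollar a b s t : a < b ->
  lexle (nseq a (sym false) ++ dollar :: s) (nseq b (sym false) ++ dollar :: t).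
Proof. by elim: a b => [|a IH] [|b] //= /IH. Qed.

Lemma lexle_nseq_dollar_word a w s t : a < size w ->
  lexle (nseq a (sym false) ++ dollar :: s) (map sym w ++ t).
Proof. by elim: a w => [|a IH] [|[] w] //= /IH ->. Qed.

Fixpoint binval (s : seq bool) : nat :=
  if s is b :: s' then b * 2 ^ size s' + binval s' else 0.

Lemma binval_lt s : binval s < 2 ^ size s.
Proof. by elim: s => [|[] s IH] //=; rewrite expnS; lia. Qed.

Lemma binval_inj s t : size s = size t -> binval s = binval t -> s = t.
Proof.
elim: s t => [|a s IH] [|b t] //= [size_st].
have := binval_lt s; rewrite size_st => s_lt; have t_lt := binval_lt t.
case: a; case: b; rewrite /= ?mul1n ?mul0n ?add0n => E; try lia.
  by rewrite (IH t) //; lia.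
by rewrite (IH t).
Qed.

Lemma binval_cat s t : binval (s ++ t) = binval s * 2 ^ size t + binval t.
Proof. by elim: s => [|b s IH] //=; rewrite IH size_cat expnD; lia. Qed.

Lemma binval_nseq (b : bool) j : binval (nseq j b) = b * (2 ^ j - 1).
Proof.
elim: j => [|j IH] /=; first by rewrite muln0.
by rewrite size_nseq IH expnS; have := expn_gt0 2 j; case: b {IH}; lia.
Qed.

Lemma lexle_binval s t a b : size s = size t -> binval s < binval t ->
  lexle (map sym s ++ a) (map sym t ++ b).
Proof.
elim: s t => [|x s IH] [|y t] //= [size_st].
have := binval_lt s; rewrite size_st => s_lt; have t_lt := binval_lt t.
case: x; case: y => //= lt_st; try lia; apply: IH => //; lia.
Qed.

(** * The BWT of U_lin$ *)

Definition bwt_block := [:: sym false; sym false; sym true; sym true].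
Definition bwt_end := [:: sym false; sym true; sym false].
Definition bwt_tail m := flatten (nseq m bwt_block) ++ bwt_end.

Lemma bwt_targetE k :
  bwt_target k = nseq k.-1 (sym false) ++ [:: sym true; dollar] ++ bwt_tail (2 ^ (k - 2) - 1).
Proof. by []. Qed.

Lemma bwt_tailS m : bwt_tail m.+1 = bwt_block ++ bwt_tail m.
Proof. by rewrite /bwt_tail catA. Qed.

Lemma size_bwt_tail m : size (bwt_tail m) = 4 * m + 3.
Proof. by elim: m => // m IH; rewrite bwt_tailS size_cat IH /=; lia. Qed.

Lemma nth_bwt_tail m q s : s < 4 -> q <= m ->
  nth 0 (bwt_tail m) (4 * q + s) = nth 0 (if q < m then bwt_block else bwt_end) s.
Proof.
move=> s_lt; elim: m q => [|m IH] [|q] q_le //; rewrite bwt_tailS nth_cat.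
  by rewrite muln0 s_lt.
by rewrite mulnS -addnA ltnNge leq_addr /= addKn IH.
Qed.

Lemma rev_negb_eq_nseq (a : seq bool) j :
  (rev (map negb a) == nseq j false) = (a == nseq j true).
Proof.
have -> : nseq j false = rev (map negb (nseq j true)) by rewrite map_nseq rev_nseq.
by rewrite (can_eq revK) (inj_eq (inj_map (can_inj negbK))).
Qed.

Lemma pred_bit_cat2 k a b1 b2 : 1 < k -> size a = k - 2 ->
  pred_bit k (a ++ [:: b1; b2]) = (b1 == b2) (+) b1 && (a == nseq (k - 2) true).
Proof.
move=> k_gt1 size_a; rewrite /pred_bit /feedback /state1 map_cat rev_cat /=.
have -> : k.-1 = (k - 2).+1 by lia.
have -> : nseq k false = [:: false, false & nseq (k - 2) false].
  by rewrite -{1}(subnK k_gt1) addn2.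
rewrite !eqseq_cons rev_negb_eq_nseq.
by case: b1; case: b2; case: (a == _).
Qed.

Lemma pred_bit_binval k w : 1 < k -> size w = k -> 0 < binval w ->
  sym (pred_bit k w) = nth 0 (bwt_tail (2 ^ (k - 2) - 1)) (binval w).-1.
Proof.
move=> k_gt1 + w_gt0; set m := 2 ^ (k - 2) - 1.
case/lastP: w w_gt0 => [//|w' b2]; case/lastP: w' => [|a b1] w_gt0.
  by rewrite size_rcons => k1; move: k_gt1; rewrite -k1.
rewrite -!cats1 -catA !size_cat /= in w_gt0 * => size_w.
have size_a : size a = k - 2 by lia.
have A_le : binval a <= m by have := binval_lt a; rewrite size_a /m; lia.
have A_eq : (a == nseq (k - 2) true) = (binval a == m).
  apply/eqP/eqP => [->|]; first by rewrite binval_nseq mul1n.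
  by rewrite -[m]mul1n -(binval_nseq true) => /binval_inj; apply; rewrite size_nseq.
rewrite pred_bit_cat2 // binval_cat A_eq in w_gt0 *.
have -> : 2 ^ size [:: b1; b2] = 4 by [].
have -> : binval [:: b1; b2] = b1 * 2 + b2 by rewrite /= muln1 addn0.
have tailE s : s < 4 -> nth 0 (bwt_tail m) (4 * binval a + s) =
    nth 0 (if binval a == m then bwt_end else bwt_block) s.
  by move=> s_lt; rewrite nth_bwt_tail // ltn_neqAle A_le andbT; case: eqP.
move: w_gt0; case: b1; case: b2 => /= w_gt0.
- by rewrite (_ : _.-1 = 4 * binval a + 2) ?tailE //; [case: eqP | lia].
- by rewrite (_ : _.-1 = 4 * binval a + 1) ?tailE //; [case: eqP | lia].
- by rewrite (_ : _.-1 = 4 * binval a + 0) ?tailE //; [case: eqP | lia].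
- rewrite (_ : _.-1 = 4 * (binval a).-1 + 3) ?nth_bwt_tail //; try lia.
  by rewrite ifT //; lia.
Qed.

Lemma last_rot (T : Type) (x0 : T) (s : seq T) i :
  0 < i <= size s -> last x0 (rot i s) = nth x0 s i.-1.
Proof.
by case: i => // i /andP [_ i_lt]; rewrite /rot last_cat (take_nth x0 i_lt) last_rcons.
Qed.

Lemma size_bwt_target k : 1 < k -> size (bwt_target k) = 2 ^ k + k.
Proof.
move=> k_gt1; rewrite bwt_targetE size_cat size_nseq /= size_bwt_tail.
have -> : 2 ^ k = 4 * 2 ^ (k - 2) by rewrite (_ : 4 = 2 ^ 2) // -expnD subnKC.
by have := expn_gt0 2 (k - 2); lia.
Qed.

Section BWTTarget.
Variable k : nat.
Hypothesis k_gt0 : 0 < k.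

Lemma nth_bwt_target_zeros j : j < k.-1 -> nth 0 (bwt_target k) j = sym false.
Proof. by move=> j_lt; rewrite nth_cat size_nseq j_lt nth_nseq j_lt. Qed.

Lemma nth_bwt_target_one : nth 0 (bwt_target k) k.-1 = sym true.
Proof. by rewrite nth_cat size_nseq ltnn subnn. Qed.

Lemma nth_bwt_target_dollar : nth 0 (bwt_target k) k = dollar.
Proof. by rewrite nth_cat size_nseq ltnNge leq_pred -subn1 subKn. Qed.

Lemma nth_bwt_target_tail j : k < j ->
  nth 0 (bwt_target k) j = nth 0 (bwt_tail (2 ^ (k - 2) - 1)) (j - k.+1).
Proof.
move=> k_lt; rewrite bwt_targetE nth_cat size_nseq ifF; last by lia.
by rewrite nth_cat /= ifF; [congr nth | ]; lia.
Qed.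

End BWTTarget.

Section LinearizedBWT.
Variable k : nat.
Hypothesis k_gt1 : 1 < k.
Local Notation n := (2 ^ k).
Variable u : seq bool.
Local Notation window i := (take k (drop i u)).
Hypothesis size_u : size u = n + k.-1.
Hypothesis window_inj : forall i j, i < n -> j < n -> window i = window j -> i = j.
Hypothesis window0 : window 0 = nseq k false.
Hypothesis nth_pred : forall i, 0 < i < n -> nth false u i.-1 = pred_bit k (window i).
Hypothesis nth_last : nth false u n.-1 = true.
Hypothesis nth_tail : forall i, n <= i < n + k.-1 -> nth false u i = false.
Local Notation v := (map sym u ++ [:: dollar]).
Local Notation N := (n + k).

Lemma size_v : size v = N.
Proof. by rewrite size_cat size_map size_u /= addn1 -addnS prednK // ltnW. Qed.

Lemma size_window i : i < n -> size (window i) = k.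
Proof. by move=> i_lt; rewrite size_takel // size_drop size_u; have := ltn_exp2 k; lia. Qed.

Lemma rot_window i : i < n -> exists t, rot i v = map sym (window i) ++ t.
Proof.
move=> i_lt; rewrite /rot drop_cat size_map size_u ifT; last by lia.
by rewrite -map_drop -{1}[drop i u](cat_take_drop k) map_cat -!catA; eexists.
Qed.

Lemma rot_zeros i : n <= i -> i < N ->
  exists t, rot i v = nseq (N.-1 - i) (sym false) ++ dollar :: t.
Proof.
move=> i_ge i_lt; rewrite /rot.
have -> : drop i v = nseq (N.-1 - i) (sym false) ++ [:: dollar].
  rewrite drop_cat size_map size_u; case: ltnP => [i_lt'|i_ge'].
    rewrite -map_drop -map_nseq; congr (map _ _ ++ _).
    apply: (@eq_from_nth _ false) => [|j]; first by rewrite size_drop size_nseq size_u; lia.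
    rewrite size_drop size_u => j_lt; rewrite nth_drop nth_nseq ifT ?nth_tail //; lia.
  by rewrite (_ : N.-1 - i = 0) 1?(_ : i - (n + k.-1) = 0) //; lia.
by rewrite -catA; eexists.
Qed.

(* Rotations starting in u are ordered by their first window; the k rotations
   starting in the trailing 0^(k-1)$ precede them, shortest zero run first. *)
Definition rot_rank i := if i < n then k + binval (window i) else N.-1 - i.

Lemma rot_rank_lt i : i < N -> rot_rank i < N.
Proof.
rewrite /rot_rank; case: ifP => i_lt; last by lia.
by have := binval_lt (window i); rewrite size_window //; lia.
Qed.

Lemma rot_rank_inj i j : i < N -> j < N -> rot_rank i = rot_rank j -> i = j.
Proof.
rewrite /rot_rank => i_lt j_lt; case: ifP => i_n; case: ifP => j_n; try lia.
move/addnI => E; apply: window_inj => //; apply: binval_inj E.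
by rewrite !size_window.
Qed.

Lemma rot_rank_mono i j : i < N -> j < N -> rot_rank i <= rot_rank j -> lexle (rot i v) (rot j v).
Proof.
move=> i_lt j_lt; have [E|ne] := eqVneq (rot_rank i) (rot_rank j).
  by rewrite (rot_rank_inj i_lt j_lt E) lexle_refl.
move=> le_ij; have : rot_rank i < rot_rank j by rewrite ltn_neqAle ne.
rewrite /rot_rank; case: (ltnP i n) => i_n; case: (ltnP j n) => j_n lt_ij; try lia.
- have [t1 ->] := rot_window i_n; have [t2 ->] := rot_window j_n.
  by apply: lexle_binval; rewrite ?size_window //; lia.
- have [t1 ->] := rot_zeros i_n i_lt; have [t2 ->] := rot_window j_n.
  by apply: lexle_nseq_dollar_word; rewrite size_window //; lia.
- have [t1 ->] := rot_zeros i_n i_lt; have [t2 ->] := rot_zeros j_n j_lt.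
  exact: lexle_nseq_dollar.
Qed.

Lemma nth_BWT_rot_rank i : i < N -> nth 0 (BWT v) (rot_rank i) = last dollar (rot i v).
Proof.
move=> i_lt; rewrite /BWT size_v (nth_map [::]); last by rewrite size_sort size_map size_iota rot_rank_lt.
by rewrite (nth_sort_rank lexle_trans lexle_anti lexle_total rot_rank_lt rot_rank_inj rot_rank_mono).
Qed.

Lemma last_rot_v i : 0 < i < N -> last dollar (rot i v) = sym (nth false u i.-1).
Proof.
case/andP=> i_gt0 i_lt; rewrite last_rot; last by rewrite size_v i_gt0 ltnW.
by rewrite nth_cat size_map ifT ?(nth_map false) //; lia.
Qed.

Lemma BWT_linearized : BWT v = bwt_target k.
Proof.
have k_lt := ltn_exp2 k; have k_gt0 := ltnW k_gt1.
have size_BWT : size (BWT v) = N by rewrite size_map size_sort size_map size_iota size_v.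
apply: (@eq_from_nth _ 0) => [|j]; first by rewrite size_BWT size_bwt_target.
rewrite size_BWT => j_lt; have [i i_lt <-] := rank_onto rot_rank_lt rot_rank_inj j_lt.
rewrite nth_BWT_rot_rank //; have [->|i_gt0] := posnP i.
  rewrite /rot_rank expn_gt0 window0 binval_nseq mul0n addn0 nth_bwt_target_dollar //.
  by rewrite rot0 last_cat.
rewrite last_rot_v ?i_gt0 // /rot_rank; case: ltnP => [i_n|i_ge].
  have b_gt0 : 0 < binval (window i).
    rewrite lt0n; apply: contraTneq i_gt0 => b0.
    suff -> : i = 0 by [].
    apply: window_inj; rewrite ?expn_gt0 //; apply: binval_inj.
      by rewrite !size_window ?expn_gt0.
    by rewrite b0 window0 binval_nseq mul0n.
  rewrite nth_pred ?i_gt0 // pred_bit_binval ?size_window // nth_bwt_target_tail //; last by lia.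
  by congr nth; lia.
have [->|i_ne] := eqVneq i n.
  by rewrite nth_last (_ : N.-1 - n = k.-1) ?nth_bwt_target_one //; lia.
by rewrite nth_tail ?nth_bwt_target_zeros //; lia.
Qed.

End LinearizedBWT.

Lemma runs_nseq_cat j x y s : x != y -> runs (nseq j.+1 x ++ y :: s) = 1 + runs (y :: s).
Proof. by move=> xy; elim: j => [|j /= ->] /=; rewrite ?xy // eqxx. Qed.

Lemma head_bwt_tail m : head 0 (bwt_tail m) = sym false.
Proof. by case: m. Qed.

Lemma runs_bwt_tail m : runs (bwt_tail m) = 2 * m + 3.
Proof.
elim: m => // m IH; rewrite bwt_tailS.
by have := head_bwt_tail m; case: (bwt_tail m) IH => [|x s] //= -> ->; rewrite /sym /=; lia.
Qed.

Lemma runs_bwt_target k : 1 < k -> runs (bwt_target k) = 2 ^ k.-1 + 4.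
Proof.
move=> k_gt1; rewrite bwt_targetE; have -> : k.-1 = (k - 2).+1 by lia.
rewrite runs_nseq_cat //.
have := head_bwt_tail (2 ^ (k - 2) - 1); have := runs_bwt_tail (2 ^ (k - 2) - 1).
case: (bwt_tail _) => [|x s] //= -> ->.
by rewrite expnS /sym /dollar /=; have := expn_gt0 2 (k - 2); lia.
Qed.

Theorem lemma3 (k : nat) (x0 : seq bool) (c : nat) :
  2 <= k ->
  primitive_poly2 (Tpoly k) ->
  size x0 = k ->
  c < 2 ^ k ->
  take k (rotation (Mword k x0) c) = nseq k false ->
  let U := rotation (Mword k x0) c in
  let Ulin := U ++ take k.-1 U in
  BWT (map sym Ulin ++ [:: dollar]) = bwt_target k /\
  runs (BWT (map sym Ulin ++ [:: dollar])) = 2 ^ k.-1 + 4.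
Proof.
move=> k_gt1 Tk_primitive size_x0 c_lt U_prefix U Ulin.
have BWT_Ulin : BWT (map sym Ulin ++ [:: dollar]) = bwt_target k.
  apply: BWT_linearized => //.
  - exact: size_Ulin.
  - exact: Ulin_window_inj.
  - exact: Ulin_prefix.
  - exact: nth_Ulin_pred.
  - exact: nth_Ulin_last.
  - exact: nth_Ulin_tail.
by rewrite BWT_Ulin runs_bwt_target.
Qed.
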